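(* For two candidates, using Weighted Majority Rule 5 (defined in the context), the selected candidate $W\in\{P,Q\}$ always satisfies $SC(W)\le\sqrt2\min\{SC(P),SC(Q)\}$, i.e., the distortion is at most $\sqrt2$; by the lower bound for exact strengths this is the best possible bound.
   Context: Voters $N$ and candidates $P,Q$ are points of an arbitrary metric space $(X,d)$; $SC(Y)=\sum_{i\in N}d(i,Y)$. $A$ is the set of voters preferring $P$ ($d(i,P)\le d(i,Q)$), with exact strengths $\alpha_i=d(i,Q)/d(i,P)$; $B$ the set preferring $Q$, with strengths $\beta_j=d(j,P)/d(j,Q)$. Define $w(x)=\frac{\sqrt2x-1}{x+1}$ if $x>\sqrt2$ and $w(x)=x-1$ if $1\le x\le\sqrt2$. Weighted Majority Rule 5: each $i\in A$ gets weight $w(\alpha_i)$, each $j\in B$ gets weight $w(\beta_j)$; select $P$ if $\sum_{i\in A}w(\alpha_i)\ge\sum_{j\in B}w(\beta_j)$, otherwise $Q$. *)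

From Stdlib Require Import Reals Lra List.
Open Scope R_scope.

Definition is_metric {X : Type} (d : X -> X -> R) : Prop :=
  (forall x y, 0 <= d x y) /\
  (forall x y, d x y = 0 <-> x = y) /\
  (forall x y, d x y = d y x) /\
  (forall x y z, d x z <= d x y + d y z).

(* Social cost SC(Y) = sum_{i in N} d(i,Y); voters N given as a finite list
   (multiset) of points. *)
Definition SC {X : Type} (d : X -> X -> R) (N : list X) (Y : X) : R :=
  fold_right (fun i acc => d i Y + acc) 0 N.

Definition w5 (x : R) : R :=
  if Rlt_dec (sqrt 2) x then (sqrt 2 * x - 1) / (x + 1) else x - 1.

(* Weight of a voter whose distance to its preferred candidate is a and to the
   other candidate is b (so the exact strength is b/a).  Convention when a = 0:
   the strength is +infinity and the weight is lim_{x->oo} w5 x = sqrt 2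
   (if b > 0); if a = b = 0 then both candidates coincide and the weight is
   w5 1 = 0 (strength 1). *)
Definition voter_weight (a b : R) : R :=
  if Req_EM_T a 0 then (if Req_EM_T b 0 then 0 else sqrt 2) else w5 (b / a).

Definition scoreP {X : Type} (d : X -> X -> R) (N : list X) (P Q : X) : R :=
  fold_right (fun i acc =>
    (if Rle_dec (d i P) (d i Q) then voter_weight (d i P) (d i Q) else 0) + acc) 0 N.

Definition scoreQ {X : Type} (d : X -> X -> R) (N : list X) (P Q : X) : R :=
  fold_right (fun i acc =>
    (if Rle_dec (d i P) (d i Q) then 0 else voter_weight (d i Q) (d i P)) + acc) 0 N.

Definition WMR5 {X : Type} (d : X -> X -> R) (N : list X) (P Q : X) : X :=
  if Rle_dec (scoreQ d N P Q) (scoreP d N P Q) then P else Q.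

(* A voter at distances a <= b from its preferred and its other candidate forces
   b - a <= d(P,Q) <= a + b.  With x = b/a, the weight w(x) lies between the two values
   that make the voter's contribution to SC(P) - sqrt 2 SC(Q) and to
   SC(Q) - sqrt 2 SC(P) balanced by d(P,Q) times its signed weight.  Summing over
   voters, SC(P) - sqrt 2 SC(Q) <= d(P,Q) (scoreQ - scoreP) and symmetrically, so the
   candidate with the larger score costs at most sqrt 2 times the other. *)
From Stdlib Require Import Reals Lra Psatz List.
Open Scope R_scope.

Lemma sqrt2_sq : sqrt 2 * sqrt 2 = 2.
Proof. apply sqrt_sqrt; lra. Qed.

Lemma sqrt2_bounds : 1 < sqrt 2 < 3/2.
Proof. pose proof sqrt2_sq; pose proof (sqrt_pos 2); split; nra. Qed.

Lemma w5_small (x : R) : x <= sqrt 2 -> w5 x = x - 1.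
Proof. unfold w5; destruct (Rlt_dec (sqrt 2) x); lra. Qed.

Lemma w5_large (x : R) : sqrt 2 < x -> (x + 1) * w5 x = sqrt 2 * x - 1.
Proof.
  intro Hx; pose proof sqrt2_bounds; unfold w5.
  destruct (Rlt_dec (sqrt 2) x); [field|]; lra.
Qed.

Lemma w5_nonneg (x : R) : 1 <= x -> 0 <= w5 x.
Proof.
  intro Hx; pose proof sqrt2_bounds.
  destruct (Rle_dec x (sqrt 2)) as [Hs|Hs].
  - rewrite w5_small; lra.
  - pose proof (w5_large x ltac:(lra)); nra.
Qed.

Lemma w5_upper (x : R) : 1 <= x -> (x + 1) * w5 x <= sqrt 2 * x - 1.
Proof.
  intro Hx; pose proof sqrt2_bounds.
  destruct (Rle_dec x (sqrt 2)) as [Hs|Hs].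
  - rewrite w5_small; nra.
  - rewrite w5_large; lra.
Qed.

Lemma w5_lower (x : R) : 1 <= x -> x - sqrt 2 <= (x - 1) * w5 x.
Proof.
  intro Hx; pose proof sqrt2_bounds; pose proof sqrt2_sq.
  destruct (Rle_dec x (sqrt 2)) as [Hs|Hs].
  - rewrite w5_small; nra.
  - pose proof (w5_large x ltac:(lra)); pose proof (w5_nonneg x Hx).
    (* (sqrt 2 x - 1)(x - 1) - (x - sqrt 2)(x + 1) = (sqrt 2 - 1)(x - sqrt 2 - 1)^2 *)
    assert (0 <= (sqrt 2 - 1) * (x - (sqrt 2 + 1)) ^ 2)
      by (apply Rmult_le_pos; [lra | apply pow2_ge_0]).
    nra.
Qed.

Lemma voter_weight_bounds (a b D : R) :
  0 <= a <= b -> b - a <= D <= a + b ->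
  a + D * voter_weight a b <= sqrt 2 * b /\ b <= sqrt 2 * a + D * voter_weight a b.
Proof.
  intros Hab HD; pose proof sqrt2_bounds.
  unfold voter_weight; destruct (Req_EM_T a 0) as [Ha0|Ha0].
  - destruct (Req_EM_T b 0); subst; split; nra.
  - set (x := b / a).
    assert (Hb : b = x * a) by (unfold x; field; lra).
    assert (Hx : 1 <= x) by (rewrite Hb in Hab; nra).
    pose proof (w5_nonneg x Hx); pose proof (w5_upper x Hx); pose proof (w5_lower x Hx).
    rewrite Hb in HD |- *; split; nra.
Qed.

Lemma SC_nonneg {X : Type} (d : X -> X -> R) (N : list X) (Y : X) :
  is_metric d -> 0 <= SC d N Y.
Proof.
  intros [Hpos _]; induction N as [|i N IH]; simpl; [lra|].
  pose proof (Hpos i Y); lra.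
Qed.

Lemma SC_sqrt2_bounds {X : Type} (d : X -> X -> R) (N : list X) (P Q : X) :
  is_metric d ->
  SC d N P - sqrt 2 * SC d N Q <= d P Q * (scoreQ d N P Q - scoreP d N P Q) /\
  SC d N Q - sqrt 2 * SC d N P <= d P Q * (scoreP d N P Q - scoreQ d N P Q).
Proof.
  intros [Hpos [_ [Hsym Htri]]].
  induction N as [|i N IH]; simpl; [lra|].
  pose proof (Hpos i P); pose proof (Hpos i Q).
  pose proof (Htri i P Q); pose proof (Htri i Q P); pose proof (Htri P i Q).
  pose proof (Hsym P i); pose proof (Hsym Q P).
  destruct (Rle_dec (d i P) (d i Q)).
  - destruct (voter_weight_bounds (d i P) (d i Q) (d P Q)); lra.
  - destruct (voter_weight_bounds (d i Q) (d i P) (d P Q)); lra.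
Qed.

Theorem mainTheorem12 (X : Type) (d : X -> X -> R) (N : list X) (P Q : X) :
  is_metric d ->
  SC d N (WMR5 d N P Q) <= sqrt 2 * Rmin (SC d N P) (SC d N Q).
Proof.
  intros Hm.
  pose proof (SC_nonneg d N P Hm); pose proof (SC_nonneg d N Q Hm).
  destruct (SC_sqrt2_bounds d N P Q Hm).
  pose proof sqrt2_bounds; pose proof (proj1 Hm P Q).
  unfold WMR5; destruct (Rle_dec (scoreQ d N P Q) (scoreP d N P Q));
    unfold Rmin; destruct (Rle_dec (SC d N P) (SC d N Q)); nra.
Qed.
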